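(* Let $f\in C^1$ and suppose that for every $a\in\mathbb R$ the initial value problem $v_{xx}+f(x,v,v_x)=0$, $v(0)=a$, $v_x(0)=0$ has a solution $v(\cdot,a)$ on $[0,1]$. Let $v_j,v_k$ be two solutions of the Neumann problem $v_{xx}+f(x,v,v_x)=0$, $v_x(0)=v_x(1)=0$, with $a_j:=v_j(0)<a_k:=v_k(0)$. Set $w(x):=(v_k(x)-v_j(x))/(a_k-a_j)$, and let $\vartheta:[0,1]\to\mathbb R$ be the continuous function with $\vartheta(0)=0$ such that $w=\rho\cos\vartheta$, $w_x=-\rho\sin\vartheta$ for some $\rho>0$ (clockwise Prüfer angle; $(w,w_x)$ never vanishes since $w$ is a nontrivial solution of a linear second order ODE with $w(0)=1$, $w_x(0)=0$). Then $\vartheta(1)/\pi$ is an integer and $$z(v_k-v_j)=\vartheta(1)/\pi,$$ where $z(\varphi)$ denotes the number of strict sign changes of $\varphi$ on $[0,1]$. *)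

From Stdlib Require Import Reals Lra.
Open Scope R_scope.

Definition in01 (x : R) : Prop := 0 <= x <= 1.

Definition cont3 (g : R -> R -> R -> R) : Prop :=
  forall x y z eps, 0 < eps -> exists delta, 0 < delta /\
    forall x' y' z', Rabs (x' - x) < delta -> Rabs (y' - y) < delta ->
      Rabs (z' - z) < delta -> Rabs (g x' y' z' - g x y z) < eps.

Definition C1_3 (f : R -> R -> R -> R) : Prop :=
  cont3 f /\
  exists f1 f2 f3 : R -> R -> R -> R,
    cont3 f1 /\ cont3 f2 /\ cont3 f3 /\
    forall x y z,
      derivable_pt_lim (fun t => f t y z) x (f1 x y z) /\
      derivable_pt_lim (fun t => f x t z) y (f2 x y z) /\
      derivable_pt_lim (fun t => f x y t) z (f3 x y z).

Definition deriv01 (v v' : R -> R) : Prop :=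
  forall x, in01 x -> forall eps, 0 < eps -> exists delta, 0 < delta /\
    forall y, in01 y -> Rabs (y - x) < delta ->
      Rabs (v y - v x - v' x * (y - x)) <= eps * Rabs (y - x).

Definition cont01 (g : R -> R) : Prop :=
  forall x, in01 x -> forall eps, 0 < eps -> exists delta, 0 < delta /\
    forall y, in01 y -> Rabs (y - x) < delta -> Rabs (g y - g x) < eps.

Definition is_sol01 (f : R -> R -> R -> R) (v v' v'' : R -> R) : Prop :=
  deriv01 v v' /\ deriv01 v' v'' /\
  forall x, in01 x -> v'' x + f x (v x) (v' x) = 0.

Definition sign_changes_ge (phi : R -> R) (k : nat) : Prop :=
  exists s : nat -> R,
    (forall i, (i <= k)%nat -> in01 (s i)) /\
    (forall i, (i < k)%nat -> s i < s (S i) /\ phi (s i) * phi (s (S i)) < 0).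

Definition zero_number (phi : R -> R) (n : nat) : Prop :=
  sign_changes_ge phi n /\ ~ sign_changes_ge phi (S n).

From Stdlib Require Import Reals Lra Lia Classical IndefiniteDescription.
Open Scope R_scope.

(* Write W := vk - vj = P cos theta and W' = - P sin theta with P > 0.  At a zero x0
   of W we have W' x0 <> 0, and W u * W' x0 = P u * P x0 * sin (theta u - theta x0)
   has the sign of u - x0: the clockwise Pruefer angle crosses every level
   pi/2 + k pi upwards only.  Hence theta 1, a multiple of pi because W' 1 = 0, is
   some n pi with n >= 0; theta takes the values 0, pi, ..., n pi in increasing
   order, which gives n sign changes of W, and between two consecutive sign changes
   theta passes a zero of W, i.e. gains at least pi, so there is no (n+1)-st.
   The differential equation is used only through the existence of the angle
   theta, which is a hypothesis. *)

(* g o clamp01 extends g from [0,1] to a continuous function on R, to which Stdlib's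
   IVT applies. *)
Definition clamp01 (x : R) : R := Rmax 0 (Rmin 1 x).

Lemma clamp01_in01 x : in01 (clamp01 x).
Proof. unfold clamp01, in01, Rmax, Rmin; repeat destruct Rle_dec; lra. Qed.

Lemma clamp01_id x : in01 x -> clamp01 x = x.
Proof. unfold clamp01, in01, Rmax, Rmin; repeat destruct Rle_dec; lra. Qed.

Lemma clamp01_lipschitz x y : Rabs (clamp01 y - clamp01 x) <= Rabs (y - x).
Proof.
  unfold clamp01, Rmax, Rmin, Rabs.
  repeat destruct Rle_dec; repeat destruct Rcase_abs; lra.
Qed.

Lemma cont01_clamp_continuity g : cont01 g -> continuity (fun x => g (clamp01 x)).
Proof.
  intros Hg x eps Heps.
  destruct (Hg (clamp01 x) (clamp01_in01 x) eps Heps) as [d [Hd Hgd]].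
  exists d; split; [exact Hd|]; intros y [_ Hyx]; simpl; unfold R_dist in *.
  apply Hgd; [apply clamp01_in01|].
  exact (Rle_lt_trans _ _ _ (clamp01_lipschitz x y) Hyx).
Qed.

Lemma ivt01 g a b y : cont01 g -> 0 <= a -> a <= b -> b <= 1 ->
  (g a - y) * (g b - y) <= 0 -> exists c, a <= c <= b /\ g c = y.
Proof.
  intros Hg Ha Hab Hb Hsign.
  assert (Hclamp : forall t, a <= t <= b -> clamp01 t = t)
    by (intros t Ht; apply clamp01_id; unfold in01; lra).
  destruct (IVT_cor (fun t => g (clamp01 t) - y) a b) as [c [Hc Hgc]]; trivial.
  - apply continuity_minus; [apply cont01_clamp_continuity, Hg | apply continuity_const].
    intros ? ?; reflexivity.
  - rewrite !Hclamp; lra.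
  - exists c; split; [exact Hc|]; rewrite Hclamp in Hgc; lra.
Qed.

Lemma deriv01_cont v v' : deriv01 v v' -> cont01 v.
Proof.
  intros Hv x Hx eps Heps.
  destruct (Hv x Hx 1 Rlt_0_1) as [d [Hd Hvd]].
  set (K := Rabs (v' x) + 1).
  assert (HK : 0 < K) by (unfold K; pose proof (Rabs_pos (v' x)); lra).
  exists (Rmin d (eps / K)); split; [apply Rmin_pos; [exact Hd | apply Rdiv_lt_0_compat; lra]|].
  intros y Hy Hyx.
  assert (Hyd : Rabs (y - x) < d) by (eapply Rlt_le_trans; [exact Hyx | apply Rmin_l]).
  assert (Hye : Rabs (y - x) * K < eps).
  { apply (Rmult_lt_reg_r (/ K)); [apply Rinv_0_lt_compat, HK|].
    rewrite Rmult_assoc, Rinv_r by lra; rewrite Rmult_1_r.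
    eapply Rlt_le_trans; [exact Hyx | apply Rmin_r]. }
  specialize (Hvd y Hy Hyd).
  assert (Htri : Rabs (v y - v x) <= Rabs (v y - v x - v' x * (y - x)) + Rabs (v' x) * Rabs (y - x)).
  { rewrite <- Rabs_mult.
    replace (v y - v x) with ((v y - v x - v' x * (y - x)) + v' x * (y - x)) at 1 by ring.
    apply Rabs_triang. }
  unfold K in Hye; lra.
Qed.

Lemma deriv01_sub v1 v1' v2 v2' : deriv01 v1 v1' -> deriv01 v2 v2' ->
  deriv01 (fun x => v2 x - v1 x) (fun x => v2' x - v1' x).
Proof.
  intros H1 H2 x Hx eps Heps.
  destruct (H1 x Hx (eps / 2)) as [d1 [Hd1 H1d]]; [lra|].
  destruct (H2 x Hx (eps / 2)) as [d2 [Hd2 H2d]]; [lra|].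
  exists (Rmin d1 d2); split; [apply Rmin_pos; assumption|].
  intros y Hy Hyx.
  specialize (H1d y Hy (Rlt_le_trans _ _ _ Hyx (Rmin_l _ _))).
  specialize (H2d y Hy (Rlt_le_trans _ _ _ Hyx (Rmin_r _ _))).
  replace (v2 y - v1 y - (v2 x - v1 x) - (v2' x - v1' x) * (y - x))
    with ((v2 y - v2 x - v2' x * (y - x)) - (v1 y - v1 x - v1' x * (y - x))) by ring.
  eapply Rle_trans; [apply Rabs_triang|]; rewrite Rabs_Ropp; lra.
Qed.

Lemma cont01_last_zero g a b : cont01 g -> 0 <= a -> b <= 1 ->
  (exists t, a <= t <= b /\ g t = 0) ->
  exists m, a <= m <= b /\ g m = 0 /\ forall t, a <= t <= b -> g t = 0 -> t <= m.
Proof.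
  intros Hg Ha Hb [t0 [Ht0 Hgt0]].
  set (Z := fun t => a <= t <= b /\ g t = 0).
  destruct (completeness Z) as [m [Hub Hlub]].
  { exists b; intros t [Ht _]; lra. }
  { exists t0; split; assumption. }
  assert (Hm : a <= m <= b).
  { split; [apply Rle_trans with t0; [lra | apply Hub; split; assumption]|].
    apply Hlub; intros t [Ht _]; lra. }
  exists m; split; [exact Hm|]; split; [|intros t Ht Hgt; apply Hub; split; assumption].
  apply NNPP; intro Hgm.
  assert (Hm01 : in01 m) by (unfold in01; lra).
  destruct (Hg m Hm01 (Rabs (g m))) as [d [Hd Hgd]]; [apply Rabs_pos_lt, Hgm|].
  destruct (classic (exists t, Z t /\ m - d < t)) as [[t [[Ht Hgt] Htd]] | Hnone].
  - assert (Htm : t <= m) by (apply Hub; split; assumption).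
    assert (Hclose : Rabs (t - m) < d) by (unfold Rabs; destruct Rcase_abs; lra).
    specialize (Hgd t ltac:(unfold in01; lra) Hclose).
    rewrite Hgt, Rminus_0_l, Rabs_Ropp in Hgd; lra.
  - assert (m <= m - d); [|lra].
    apply Hlub; intros t Ht; apply Rnot_lt_le; intro Htd; apply Hnone; exists t; split; assumption.
Qed.

Definition crosses_upward (g : R -> R) (x0 : R) : Prop :=
  exists d, 0 < d /\ forall u, in01 u -> Rabs (u - x0) < d -> u <> x0 -> 0 < g u * (u - x0).

Lemma crosses_upward_pos_after g a b : 0 <= a -> a < b -> b <= 1 -> crosses_upward g a ->
  exists u, a < u < b /\ 0 < g u.
Proof.
  intros Ha Hab Hb [d [Hd Hg]].
  set (u := a + Rmin d (b - a) / 2).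
  assert (Hmin : 0 < Rmin d (b - a) <= d /\ Rmin d (b - a) <= b - a)
    by (split; [split; [apply Rmin_pos | apply Rmin_l] | apply Rmin_r]; lra).
  assert (Hu : a < u < b) by (unfold u; lra).
  exists u; split; [exact Hu|].
  assert (Hgu : 0 < g u * (u - a)).
  { apply Hg; [unfold in01; lra | rewrite Rabs_right; unfold u; lra | lra]. }
  apply (Rmult_lt_reg_r (u - a)); lra.
Qed.

Lemma crosses_upward_neg_before g a b : 0 <= a -> a < b -> b <= 1 -> crosses_upward g b ->
  exists u, a < u < b /\ g u < 0.
Proof.
  intros Ha Hab Hb [d [Hd Hg]].
  set (u := b - Rmin d (b - a) / 2).
  assert (Hmin : 0 < Rmin d (b - a) <= d /\ Rmin d (b - a) <= b - a)
    by (split; [split; [apply Rmin_pos | apply Rmin_l] | apply Rmin_r]; lra).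
  assert (Hu : a < u < b) by (unfold u; lra).
  exists u; split; [exact Hu|].
  assert (Hgu : 0 < g u * (u - b)).
  { apply Hg; [unfold in01; lra | rewrite Rabs_left; unfold u; lra | lra]. }
  apply (Rmult_lt_reg_r (b - u)); lra.
Qed.

Lemma cont01_upward_crossings_pos g x y : cont01 g ->
  (forall x0, in01 x0 -> g x0 = 0 -> crosses_upward g x0) ->
  in01 x -> in01 y -> x < y -> 0 <= g x -> 0 < g y.
Proof.
  intros Hg Hup Hx Hy Hxy Hgx; unfold in01 in Hx, Hy.
  apply Rnot_le_lt; intro Hgy.
  assert (Hb : exists b, x < b <= y /\ g b < 0).
  { destruct Hgy as [Hgy | Hgy]; [exists y; split; lra|].
    destruct (crosses_upward_neg_before g x y) as [b [Hb Hgb]]; try lra.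
    - apply Hup; [unfold in01; lra | exact Hgy].
    - exists b; split; lra. }
  destruct Hb as [b [Hb Hgb]].
  destruct (cont01_last_zero g x b Hg) as [m [Hm [Hgm Hlast]]]; try lra.
  { apply (ivt01 g x b 0 Hg); try lra; nra. }
  assert (Hmb : m < b) by (destruct (proj2 Hm) as [|Heq]; [assumption | rewrite Heq in Hgm; lra]).
  destruct (crosses_upward_pos_after g m b) as [u [Hu Hgu]]; try lra.
  { apply Hup; [unfold in01; lra | exact Hgm]. }
  destruct (ivt01 g u b 0 Hg) as [t [Ht Hgt]]; try lra; [nra|].
  specialize (Hlast t ltac:(lra) Hgt); lra.
Qed.

Lemma deriv01_crosses_upward W W' x0 : deriv01 W W' -> in01 x0 -> W x0 = 0 -> W' x0 <> 0 ->
  crosses_upward (fun u => W u * W' x0) x0.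
Proof.
  intros HW Hx0 HWx0 Ha.
  set (a := W' x0) in *.
  destruct (HW x0 Hx0 (Rabs a / 2)) as [d [Hd Hlin]]; [apply Rabs_pos_lt in Ha; lra|].
  exists d; split; [exact Hd|]; intros u Hu Hud Hux.
  specialize (Hlin u Hu Hud); rewrite HWx0 in Hlin; fold a in Hlin.
  set (e := W u - 0 - a * (u - x0)) in Hlin.
  set (q := a * (u - x0)).
  assert (Hq : 0 < q * q) by (apply Rsqr_pos_lt; apply Rmult_integral_contrapositive; split; lra).
  assert (Hqq : Rabs q * Rabs q = q * q)
    by (rewrite <- Rabs_mult; apply Rabs_pos_eq; lra).
  assert (Heq : Rabs (e * q) <= q * q / 2).
  { assert (Rabs e <= Rabs q / 2) by (unfold q; rewrite Rabs_mult; lra).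
    rewrite Rabs_mult; pose proof (Rabs_pos q); nra. }
  pose proof (Rle_abs (- (e * q))) as Hlow; rewrite Rabs_Ropp in Hlow.
  replace (W u * a * (u - x0)) with (q * q + e * q) by (unfold e, q; ring).
  lra.
Qed.

Lemma sin_pos_small d : - PI < d -> 0 < sin d -> 0 < d.
Proof.
  intros Hd Hs; apply Rnot_le_lt; intros [Hneg | Hzero].
  - pose proof (sin_lt_0_var d Hd Hneg); lra.
  - rewrite Hzero, sin_0 in Hs; lra.
Qed.

Lemma sin_mul_pos_small d h : Rabs d < PI -> 0 < sin d * h -> 0 < d * h.
Proof.
  intros Hd Hsh; apply Rabs_def2 in Hd.
  destruct (Rtotal_order h 0) as [Hh | [Hh | Hh]]; [| rewrite Hh in Hsh; lra |].
  - assert (Hs : 0 < sin (- d)) by (rewrite sin_neg; nra).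
    pose proof (sin_pos_small (- d) ltac:(lra) Hs); nra.
  - assert (Hs : 0 < sin d) by nra.
    pose proof (sin_pos_small d ltac:(lra) Hs); nra.
Qed.

Lemma cos_nat_PI_sub_PI2 i : cos (INR i * PI - PI / 2) = 0.
Proof.
  apply cos_eq_0_1; exists (Z.of_nat i - 1)%Z.
  rewrite minus_IZR, <- INR_IZR_INZ; field.
Qed.

Lemma cos_nat_PI_mul_succ i : cos (INR i * PI) * cos (INR (S i) * PI) = -1.
Proof.
  assert (Hsin : sin (INR i * PI) = 0) by (apply sin_eq_0_1; exists (Z.of_nat i); rewrite <- INR_IZR_INZ; reflexivity).
  pose proof (sin2_cos2 (INR i * PI)) as Hpyth; rewrite Hsin in Hpyth; unfold Rsqr in Hpyth.
  rewrite S_INR, Rmult_plus_distr_r, Rmult_1_l, neg_cos; lra.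
Qed.

Lemma cos_eq_0_ge_succ c i : cos c = 0 -> INR i * PI - PI / 2 < c -> INR i * PI + PI / 2 <= c.
Proof.
  intros Hc Hlt; destruct (cos_eq_0_0 c Hc) as [k ->].
  pose proof PI_RGT_0.
  assert (Hk : IZR (Z.of_nat i) < IZR (k + 1)).
  { rewrite <- INR_IZR_INZ, plus_IZR.
    apply (Rmult_lt_reg_r PI); [lra|]. rewrite Rmult_plus_distr_r, Rmult_1_l; lra. }
  apply lt_IZR in Hk; assert (Hki : (Z.of_nat i <= k)%Z) by lia.
  apply IZR_le in Hki; rewrite <- INR_IZR_INZ in Hki.
  apply Rplus_le_compat_r, Rmult_le_compat_r; lra.
Qed.

Lemma sin_eq_0_nat x : sin x = 0 -> - PI < x -> exists n : nat, x = INR n * PI.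
Proof.
  intros Hs Hx; destruct (sin_eq_0_0 x Hs) as [k ->].
  pose proof PI_RGT_0.
  assert (Hk : IZR (-1) < IZR k).
  { apply (Rmult_lt_reg_r PI); lra. }
  apply lt_IZR in Hk.
  exists (Z.to_nat k); rewrite INR_IZR_INZ, Znat.Z2Nat.id by lia; reflexivity.
Qed.

Section Pruefer.

Variables theta W W' P : R -> R.
Hypothesis theta_cont : cont01 theta.
Hypothesis W_deriv : deriv01 W W'.
Hypothesis P_pos : forall x, in01 x -> 0 < P x.
Hypothesis W_polar : forall x, in01 x -> W x = P x * cos (theta x).
Hypothesis W'_polar : forall x, in01 x -> W' x = - (P x * sin (theta x)).

Lemma pruefer_zero_cos x : in01 x -> W x = 0 -> cos (theta x) = 0.
Proof.
  intros Hx HWx; rewrite W_polar in HWx by exact Hx.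
  pose proof (P_pos x Hx); apply (Rmult_eq_reg_l (P x)); lra.
Qed.

Lemma pruefer_crosses_upward x0 : in01 x0 -> cos (theta x0) = 0 ->
  crosses_upward (fun u => theta u - theta x0) x0.
Proof.
  intros Hx0 Hcos.
  assert (Hsin2 : sin (theta x0) * sin (theta x0) = 1)
    by (pose proof (sin2_cos2 (theta x0)) as Hp; unfold Rsqr in Hp; rewrite Hcos in Hp; lra).
  assert (HW'0 : W' x0 <> 0).
  { rewrite W'_polar by exact Hx0; pose proof (P_pos x0 Hx0); intro Hz.
    assert (P x0 * P x0 * (sin (theta x0) * sin (theta x0)) = 0) by nra. nra. }
  destruct (deriv01_crosses_upward W W' x0 W_deriv Hx0) as [d1 [Hd1 HW]];
    [rewrite W_polar, Hcos by exact Hx0; ring | exact HW'0 |].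
  destruct (theta_cont x0 Hx0 PI) as [d2 [Hd2 Hth]]; [exact PI_RGT_0|].
  exists (Rmin d1 d2); split; [apply Rmin_pos; assumption|]; intros u Hu Hud Hux.
  specialize (HW u Hu (Rlt_le_trans _ _ _ Hud (Rmin_l _ _)) Hux); simpl in HW.
  specialize (Hth u Hu (Rlt_le_trans _ _ _ Hud (Rmin_r _ _))).
  assert (Hprod : W u * W' x0 = P u * P x0 * sin (theta u - theta x0)).
  { rewrite W_polar, W'_polar by assumption.
    replace (theta u) with (theta x0 + (theta u - theta x0)) at 1 by ring.
    rewrite cos_plus, Hcos.
    transitivity (P u * P x0 * sin (theta u - theta x0) * (sin (theta x0) * sin (theta x0))); [ring|].
    rewrite Hsin2; ring. }
  rewrite Hprod in HW.
  pose proof (Rmult_lt_0_compat _ _ (P_pos u Hu) (P_pos x0 Hx0)) as HPP.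
  apply (sin_mul_pos_small _ _ Hth).
  apply (Rmult_lt_reg_l (P u * P x0)); [exact HPP|]; lra.
Qed.

Lemma pruefer_angle_passes c x y : cos c = 0 -> in01 x -> in01 y -> x < y ->
  c <= theta x -> c < theta y.
Proof.
  intros Hc Hx Hy Hxy Hcx.
  apply Rlt_0_minus, (cont01_upward_crossings_pos (fun t => theta t - c) x y); trivial.
  - intros t Ht eps Heps; destruct (theta_cont t Ht eps Heps) as [d [Hd Hclose]].
    exists d; split; [exact Hd|]; intros u Hu Hut.
    replace (theta u - c - (theta t - c)) with (theta u - theta t) by ring; auto.
  - intros x0 Hx0 Hzero; replace c with (theta x0) by lra.
    apply pruefer_crosses_upward; [exact Hx0 | replace (theta x0) with c by lra; exact Hc].
  - lra.
Qed.

Lemma pruefer_angle_lt_mono c x y : cos c = 0 -> in01 x -> in01 y -> x <= y ->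
  c < theta x -> c < theta y.
Proof.
  intros Hc Hx Hy [Hxy | <-] Hcx; [|exact Hcx].
  apply (pruefer_angle_passes c x y); trivial; lra.
Qed.

Lemma pruefer_end_angle : theta 0 = 0 -> W' 1 = 0 -> exists n : nat, theta 1 = INR n * PI.
Proof.
  intros Htheta0 HW'1.
  assert (H01 : in01 0) by (unfold in01; lra).
  assert (H11 : in01 1) by (unfold in01; lra).
  apply sin_eq_0_nat.
  - rewrite W'_polar in HW'1 by exact H11; pose proof (P_pos 1 H11).
    apply (Rmult_eq_reg_l (P 1)); lra.
  - assert (Hc : cos (- (PI / 2)) = 0) by (rewrite cos_neg; apply cos_PI2).
    pose proof (pruefer_angle_passes _ 0 1 Hc H01 H11 Rlt_0_1) as Hpass.
    pose proof PI_RGT_0; lra.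
Qed.

Lemma pruefer_sign_changes_ge n : theta 0 = 0 -> theta 1 = INR n * PI -> sign_changes_ge W n.
Proof.
  intros Htheta0 Htheta1.
  pose proof PI_RGT_0 as HPI.
  assert (Hattain : forall i, exists s, (i <= n)%nat -> in01 s /\ theta s = INR i * PI).
  { intro i; destruct (Compare_dec.le_lt_dec i n) as [Hin | Hni]; [| exists 0; lia].
    destruct (ivt01 theta 0 1 (INR i * PI) theta_cont) as [s [Hs Hths]]; try lra.
    - rewrite Htheta0, Htheta1, Rminus_0_l.
      assert (INR i * PI <= INR n * PI) by (apply Rmult_le_compat_r, le_INR; lra || lia).
      assert (0 <= INR i * PI) by (apply Rmult_le_pos; [apply pos_INR | lra]).
      nra.
    - exists s; intros _; split; [exact Hs | exact Hths]. }
  destruct (functional_choice _ Hattain) as [s Hs].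
  exists s; split; [intros i Hi; apply Hs, Hi|]; intros i Hi.
  destruct (Hs i ltac:(lia)) as [Hsi Hthi]; destruct (Hs (S i) Hi) as [HsSi HthSi].
  split.
  - apply Rnot_le_lt; intro Hle.
    pose proof (pruefer_angle_lt_mono _ _ _ (cos_nat_PI_sub_PI2 (S i)) HsSi Hsi Hle) as Hmono.
    rewrite Hthi, HthSi, S_INR in Hmono; lra.
  - rewrite !W_polar, Hthi, HthSi by assumption.
    replace (P (s i) * cos (INR i * PI) * (P (s (S i)) * cos (INR (S i) * PI)))
      with (P (s i) * P (s (S i)) * (cos (INR i * PI) * cos (INR (S i) * PI))) by ring.
    rewrite cos_nat_PI_mul_succ.
    pose proof (Rmult_lt_0_compat _ _ (P_pos _ Hsi) (P_pos _ HsSi)); lra.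
Qed.

Lemma pruefer_angle_at_sign_change k s : theta 0 = 0 ->
  (forall i, (i <= k)%nat -> in01 (s i)) ->
  (forall i, (i < k)%nat -> s i < s (S i) /\ W (s i) * W (s (S i)) < 0) ->
  INR k * PI - PI / 2 < theta (s k).
Proof.
  intros Htheta0 Hin Hchange; pose proof PI_RGT_0 as HPI.
  induction k as [| k IH].
  - apply (pruefer_angle_lt_mono _ 0 _ (cos_nat_PI_sub_PI2 0)); [unfold in01; lra | apply Hin; lia | |].
    + destruct (Hin 0%nat (le_n _)); assumption.
    + rewrite Htheta0; simpl; lra.
  - specialize (IH (fun i Hi => Hin i (le_S _ _ Hi)) (fun i Hi => Hchange i (Nat.lt_lt_succ_r _ _ Hi))).
    destruct (Hchange k (Nat.lt_succ_diag_r k)) as [Hlt Hsign].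
    pose proof (Hin k (Nat.le_succ_diag_r k)) as Hsk; pose proof (Hin (S k) (le_n _)) as HsSk.
    destruct (ivt01 W (s k) (s (S k)) 0) as [t [Ht HWt]];
      [exact (deriv01_cont _ _ W_deriv) | apply Hsk | lra | apply HsSk | lra |].
    assert (Ht01 : in01 t) by (destruct Hsk, HsSk; split; lra).
    assert (HtSk : t < s (S k)).
    { destruct (proj2 Ht) as [| Heq]; [assumption|]; rewrite <- Heq, HWt in Hsign; lra. }
    pose proof (pruefer_zero_cos t Ht01 HWt) as Hcos.
    assert (Hpast : INR k * PI + PI / 2 <= theta t).
    { apply cos_eq_0_ge_succ; [exact Hcos|].
      apply (pruefer_angle_lt_mono _ (s k)); trivial; [apply cos_nat_PI_sub_PI2 | lra]. }
    pose proof (pruefer_angle_passes _ _ _ Hcos Ht01 HsSk HtSk (Rle_refl _)).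
    rewrite S_INR; lra.
Qed.

Lemma pruefer_sign_changes_lt n : theta 0 = 0 -> theta 1 = INR n * PI -> ~ sign_changes_ge W (S n).
Proof.
  intros Htheta0 Htheta1 [s [Hin Hchange]].
  pose proof (pruefer_angle_at_sign_change (S n) s Htheta0 Hin Hchange) as Hlast.
  pose proof (pruefer_angle_lt_mono _ (s (S n)) 1 (cos_nat_PI_sub_PI2 (S n))
    (Hin (S n) (le_n _)) ltac:(unfold in01; lra) ltac:(destruct (Hin (S n) (le_n _)); lra) Hlast) as Hend.
  rewrite Htheta1, S_INR in Hend; pose proof PI_RGT_0; lra.
Qed.

End Pruefer.

Theorem lemma5p1
  (f : R -> R -> R -> R) (Hf : C1_3 f)
  (Hivp : forall a : R, exists v v' v'' : R -> R,
      is_sol01 f v v' v'' /\ v 0 = a /\ v' 0 = 0)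
  (vj vj' vj'' vk vk' vk'' : R -> R)
  (Hj : is_sol01 f vj vj' vj'') (Hjn : vj' 0 = 0 /\ vj' 1 = 0)
  (Hk : is_sol01 f vk vk' vk'') (Hkn : vk' 0 = 0 /\ vk' 1 = 0)
  (Hjk : vj 0 < vk 0)
  (theta : R -> R) (Htc : cont01 theta) (Ht0 : theta 0 = 0)
  (Hpruefer : exists rho : R -> R, forall x, in01 x ->
      0 < rho x /\
      (vk x - vj x) / (vk 0 - vj 0) = rho x * cos (theta x) /\
      (vk' x - vj' x) / (vk 0 - vj 0) = - (rho x * sin (theta x))) :
  exists n : nat, theta 1 = INR n * PI /\
    zero_number (fun x => vk x - vj x) n.
Proof.
  destruct Hpruefer as [rho Hrho].
  set (D := vk 0 - vj 0) in Hrho.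
  assert (HD : 0 < D) by (unfold D; lra).
  set (P := fun x => D * rho x).
  assert (P_pos : forall x, in01 x -> 0 < P x)
    by (intros x Hx; apply Rmult_lt_0_compat; [exact HD | apply Hrho, Hx]).
  assert (W_polar : forall x, in01 x -> vk x - vj x = P x * cos (theta x)).
  { intros x Hx; replace (vk x - vj x) with ((vk x - vj x) / D * D) by (field; lra).
    rewrite (proj1 (proj2 (Hrho x Hx))); unfold P; ring. }
  assert (W'_polar : forall x, in01 x -> vk' x - vj' x = - (P x * sin (theta x))).
  { intros x Hx; replace (vk' x - vj' x) with ((vk' x - vj' x) / D * D) by (field; lra).
    rewrite (proj2 (proj2 (Hrho x Hx))); unfold P; ring. }
  pose proof (deriv01_sub _ _ _ _ (proj1 Hj) (proj1 Hk)) as W_deriv.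
  destruct (pruefer_end_angle theta _ _ P Htc W_deriv P_pos W_polar W'_polar Ht0) as [n Hn];
    [rewrite (proj2 Hjn), (proj2 Hkn); ring|].
  exists n; split; [exact Hn | split].
  - exact (pruefer_sign_changes_ge theta _ _ P Htc W_deriv P_pos W_polar W'_polar n Ht0 Hn).
  - exact (pruefer_sign_changes_lt theta _ _ P Htc W_deriv P_pos W_polar W'_polar n Ht0 Hn).
Qed.
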